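(* Let ${\cal H}$ be a finite-dimensional complex Hilbert space, let $Z$ be a positive definite operator on ${\cal H}$ with largest eigenvalue $a$ and smallest eigenvalue $b$, and let $1\le p\le 2$. Then for every subspace ${\cal E}\subset{\cal H}$, $$(Z_{\cal E})^p \ge \frac{4ab}{(a+b)^2}\,(Z^p)_{\cal E}.$$
   Context: For an operator $X$ on ${\cal H}$ and a subspace ${\cal E}$ with orthogonal projection $E$, the compression $X_{\cal E}$ is the operator $EXE$ restricted to ${\cal E}$, regarded as an operator on ${\cal E}$. The order $\ge$ is the Loewner order on Hermitian operators on ${\cal E}$. *)

From HB Require Import structures.
From mathcomp Require Import all_boot all_order all_algebra.
From mathcomp Require Import complex.
From mathcomp Require Import boolp reals exp.
Set Implicit Arguments. Unset Strict Implicit. Unset Printing Implicit Defensive.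
Import Order.TTheory GRing.Theory Num.Theory.
Local Open Scope ring_scope.

Section Defs.
Variable R : realType.
Local Notation C := R[i].

Definition rC (x : R) : C := Complex x 0.

Definition adj {m n} (A : 'M[C]_(m, n)) : 'M[C]_(n, m) := map_mx Num.conj A^T.

Definition hermitian {n} (A : 'M[C]_n) : Prop := adj A = A.

Definition psd {n} (A : 'M[C]_n) : Prop :=
  hermitian A /\ forall x : 'cV[C]_n, 0 <= (adj x *m A *m x) 0 0.

Definition posdef {n} (A : 'M[C]_n) : Prop :=
  hermitian A /\ forall x : 'cV[C]_n, x != 0 -> 0 < (adj x *m A *m x) 0 0.

Definition loewner_ge {n} (A B : 'M[C]_n) : Prop := psd (A - B).

Definition unitary {n} (U : 'M[C]_n) : Prop := U *m adj U = 1%:M.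

(* isometry V : C^k -> C^n, i.e. its columns are an orthonormal basis of a
   k-dimensional subspace E of C^n *)
Definition is_isometry {n k} (V : 'M[C]_(n, k)) : Prop := adj V *m V = 1%:M.

(* compression of X to the range E of the isometry V, regarded as an operator
   on E (written in the orthonormal basis given by the columns of V) *)
Definition compression {n k} (V : 'M[C]_(n, k)) (X : 'M[C]_n) : 'M[C]_k :=
  adj V *m X *m V.

Definition spec_decomp {n} (A : 'M[C]_n) (Ud : 'M[C]_n * 'rV[R]_n) : Prop :=
  [/\ unitary Ud.1, forall i, 0 <= Ud.2 0 i &
      A = Ud.1 *m diag_mx (\row_i rC (Ud.2 0 i)) *m adj Ud.1].

(* real power A^p of a positive semidefinite matrix, via functional calculus on
   a (chosen) spectral decomposition; 0 if A has no such decomposition *)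
Definition mxpowR {n} (A : 'M[C]_n) (p : R) : 'M[C]_n :=
  match pselect (exists Ud, spec_decomp A Ud) with
  | left h => let Ud := projT1 (cid h) in
      Ud.1 *m diag_mx (\row_i rC (powR (Ud.2 0 i) p)) *m adj Ud.1
  | right _ => 0
  end.

End Defs.

(* Diagonalize Z = U diag(d) U^* and its compression M = V^* Z V = W diag(e) W^*;
   all d_i and e_j lie in [b, a]. For a vector x the weights
   z_i = |(U^* V x)_i|^2 and u_j = |(W^* x)_j|^2 have the same total mass |x|^2
   and the same mean: sum_i d_i z_i = <x, M x> = sum_j e_j u_j.
   Let L be the chord of s |-> s^p over [b, a] and k = 4ab/(a+b)^2. Convexity
   gives s^p <= L(s); concavity of t |-> t^(p/2) at t = s^2, combined with
   k ((a+b) s - ab) <= s^2, gives k L(s) <= s^p. As L is affine,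
   k <x, (Z^p)_E x> = k sum_i d_i^p z_i <= k sum_i L(d_i) z_i
                    = k sum_j L(e_j) u_j <= sum_j e_j^p u_j = <x, (Z_E)^p x>. *)

From Pilot Require Import Defs.
From HB Require Import structures.
From mathcomp Require Import all_boot all_order all_algebra.
From mathcomp Require Import complex.
From mathcomp Require Import boolp reals exp.
From mathcomp Require interval_inference classical_sets convex hoelder.
From mathcomp Require Import ring lra.
Import Order.TTheory GRing.Theory Num.Theory.
Local Open Scope ring_scope.
Local Open Scope complex_scope.
Set Implicit Arguments. Unset Strict Implicit.

Section PowerInequalities.
Variable R : realType.
Implicit Types a b p r s t x y : R.

Lemma powR_convex p t x y : 1 <= p -> 0 <= t <= 1 -> 0 <= x -> 0 <= y ->
  (t * x + (1 - t) * y) `^ p <= t * x `^ p + (1 - t) * y `^ p.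
Proof.
move=> p1 /andP[t0 t1] x0 y0.
have := @hoelder.convex_powR R p p1 (interval_inference.Itv01 t0 t1) x y.
rewrite !classical_sets.inE /= !in_itv /= x0 y0 => /(_ isT isT).
by rewrite !convex.convRE.
Qed.

(* Concavity for [r <= 1] is convexity for [1/r >= 1], transported by [x |-> x `^ r]. *)
Lemma powR_concave r t x y : 0 < r <= 1 -> 0 <= t <= 1 -> 0 <= x -> 0 <= y ->
  t * x `^ r + (1 - t) * y `^ r <= (t * x + (1 - t) * y) `^ r.
Proof.
move=> /andP[r0 r1] t01 x0 y0; have /andP[t0 t1] := t01.
have powRK z : 0 <= z -> (z `^ r) `^ r^-1 = z.
  by move=> z0; rewrite -powRrM mulfV ?gt_eqF // powRr1.
have powRVK z : 0 <= z -> (z `^ r^-1) `^ r = z.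
  by move=> z0; rewrite -powRrM mulVf ?gt_eqF // powRr1.
have r1V : 1 <= r^-1 by rewrite invf_ge1.
have := powR_convex r1V t01 (powR_ge0 x r) (powR_ge0 y r).
rewrite !powRK // => conv.
rewrite -[leLHS]powRVK; last by rewrite addr_ge0 // mulr_ge0 ?powR_ge0 ?subr_ge0.
apply: ge0_ler_powR; rewrite ?nnegrE ?(ltW r0) ?powR_ge0 //.
by rewrite addr_ge0 // mulr_ge0 // subr_ge0.
Qed.

Definition kantorovich_const a b := 4 * a * b / (a + b) ^+ 2.

Lemma kantorovich_const_gt0 a b : 0 < a -> 0 < b -> 0 < kantorovich_const a b.
Proof.
by move=> a0 b0; rewrite divr_gt0 ?mulr_gt0 ?exprn_gt0 ?addr_gt0.
Qed.

Lemma kantorovich_const_le1 a b : kantorovich_const a b <= 1.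
Proof.
rewrite /kantorovich_const; have [->|ab0] := eqVneq ((a + b) ^+ 2) 0.
  by rewrite invr0 mulr0 ler01.
have sq_gt0 : 0 < (a + b) ^+ 2 by rewrite lt_neqAle eq_sym ab0 sqr_ge0.
rewrite ler_pdivrMr // mul1r -subr_ge0.
have -> : (a + b) ^+ 2 - 4 * a * b = (a - b) ^+ 2 by ring.
exact: sqr_ge0.
Qed.

(* [(a + b) s - a b] is the chord of [s |-> s ^+ 2] through [b] and [a]. *)
Lemma kantorovich_sqr a b s : 0 < a -> 0 < b ->
  kantorovich_const a b * ((a + b) * s - a * b) <= s ^+ 2.
Proof.
move=> a0 b0; rewrite -subr_ge0.
have -> : s ^+ 2 - kantorovich_const a b * ((a + b) * s - a * b)
          = ((a + b) * s - 2 * a * b) ^+ 2 / (a + b) ^+ 2.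
  by rewrite /kantorovich_const; field; rewrite gt_eqF ?addr_gt0.
by rewrite divr_ge0 ?sqr_ge0.
Qed.

(* Chord of [s |-> s `^ p] through [b] and [a]; for [a = b] the slope is [0]
   (division by [0]) and the chord is the constant [b `^ p]. *)
Definition chord_slope a b p := (a `^ p - b `^ p) / (a - b).
Definition chord a b p s := chord_slope a b p * s + (b `^ p - chord_slope a b p * b).

Lemma chord_convex_comb a b p s : b < a ->
  chord a b p s = (s - b) / (a - b) * a `^ p + (1 - (s - b) / (a - b)) * b `^ p.
Proof.
by move=> ba; rewrite /chord /chord_slope; field; rewrite subr_eq0 gt_eqF.
Qed.

Lemma chord_coord_between a b s : b < a -> b <= s <= a ->
  0 <= (s - b) / (a - b) <= 1.
Proof.
move=> ba /andP[bs sa]; have ab0 : 0 < a - b by rewrite subr_gt0.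
rewrite divr_ge0 ?subr_ge0 ?(ltW ba) //= ler_pdivrMr // mul1r.
by rewrite lerD2r.
Qed.

Lemma convex_combE a b s : b < a ->
  s = (s - b) / (a - b) * a + (1 - (s - b) / (a - b)) * b.
Proof. by move=> ba; field; rewrite subr_eq0 gt_eqF. Qed.

Lemma powR_le_chord a b p s : 0 <= b -> b <= s <= a -> 1 <= p ->
  s `^ p <= chord a b p s.
Proof.
move=> b0 bsa p1; have /andP[bs sa] := bsa.
have [ab|ba] := leP a b.
  have [-> ->] : s = b /\ a = b by split; lra.
  by rewrite /chord; lra.
rewrite chord_convex_comb // {1}(convex_combE s ba).
by apply: powR_convex => //; [exact: chord_coord_between | exact: le_trans b0 (ltW ba)].
Qed.

Lemma kantorovich_chord_le_powR a b p s : 0 <= b -> b <= s <= a -> 1 <= p <= 2 ->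
  kantorovich_const a b * chord a b p s <= s `^ p.
Proof.
move=> b0 bsa /andP[p1 p2]; have /andP[bs sa] := bsa.
have [<-|b_neq0] := eqVneq 0 b.
  by rewrite /kantorovich_const mulr0 !mul0r powR_ge0.
have {b_neq0}{}b0 : 0 < b by rewrite lt_neqAle b_neq0.
have [ab|ba] := leP a b.
  have [-> ->] : s = b /\ a = b by split; lra.
  have -> : chord b b p b = b `^ p by rewrite /chord; ring.
  by rewrite ler_piMl ?powR_ge0 ?kantorovich_const_le1.
have a0 : 0 < a := lt_trans b0 ba.
have s0 : 0 <= s := le_trans (ltW b0) bs.
set t := (s - b) / (a - b); set r := p / 2; set k := kantorovich_const a b.
have t01 : 0 <= t <= 1 := chord_coord_between ba bsa.
have r01 : 0 < r <= 1 by apply/andP; split; rewrite /r; lra.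
have k01 : 0 < k <= 1 by rewrite kantorovich_const_gt0 ?kantorovich_const_le1.
have powR_sqr z : 0 <= z -> z `^ p = (z ^+ 2) `^ r.
  by move=> z0; rewrite -powR_mulrn // -powRrM; congr (_ `^ _); rewrite /r; field.
have chord_sqr : t * a ^+ 2 + (1 - t) * b ^+ 2 = (a + b) * s - a * b.
  by rewrite /t; field; rewrite subr_eq0 gt_eqF.
have X0 : 0 <= (a + b) * s - a * b.
  by rewrite -chord_sqr addr_ge0 // mulr_ge0 ?sqr_ge0 ?subr_ge0; case/andP: t01.
rewrite chord_convex_comb // -/t (powR_sqr a) ?(ltW a0) // (powR_sqr b) ?(ltW b0) //.
rewrite (powR_sqr s) //.
have k0 : 0 <= k by case/andP: k01 => /ltW.
apply: le_trans (ler_wpM2l k0 (powR_concave r01 t01 (sqr_ge0 a) (sqr_ge0 b))) _.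
rewrite chord_sqr.
apply: le_trans (ler_wpM2r (powR_ge0 _ _) (ger1_powR k01 (proj2 (andP r01)))) _.
rewrite -powRM //; apply: ge0_ler_powR; rewrite ?nnegrE ?sqr_ge0 //.
- by case/andP: r01 => /ltW.
- exact: mulr_ge0.
- exact: kantorovich_sqr.
Qed.

Lemma sum_affine (I : finType) (l m : R) (x w : I -> R) :
  \sum_i (l * x i + m) * w i = l * \sum_i x i * w i + m * \sum_i w i.
Proof.
by rewrite !mulr_sumr -big_split; apply: eq_bigr => i _ /=; ring.
Qed.

Lemma sum_weighted_between (I : finType) a b (d w : I -> R) :
  (forall i, b <= d i <= a) -> (forall i, 0 <= w i) ->
  b * \sum_i w i <= \sum_i d i * w i <= a * \sum_i w i.
Proof.
move=> hd w0; rewrite !mulr_sumr; apply/andP; split; apply: ler_sum => i _;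
  by apply: ler_wpM2r => //; case/andP: (hd i).
Qed.

Lemma kantorovich_powR_sum (I J : finType) a b p (d z : I -> R) (e u : J -> R) :
  0 <= b <= a -> 1 <= p <= 2 ->
  (forall i, b <= d i <= a) -> (forall j, b <= e j <= a) ->
  (forall i, 0 <= z i) -> (forall j, 0 <= u j) ->
  \sum_i z i = \sum_j u j -> \sum_i d i * z i = \sum_j e j * u j ->
  kantorovich_const a b * \sum_i d i `^ p * z i <= \sum_j e j `^ p * u j.
Proof.
move=> /andP[b0 ba] p12 hd he z0 u0 mass mean.
have k0 : 0 <= kantorovich_const a b.
  by rewrite divr_ge0 ?sqr_ge0 // !mulr_ge0 // (le_trans b0 ba).
apply: (@le_trans _ _ (kantorovich_const a b * \sum_i chord a b p (d i) * z i)).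
  apply: ler_wpM2l => //; apply: ler_sum => i _; apply: ler_wpM2r => //.
  by apply: powR_le_chord => //; case/andP: p12.
rewrite /chord sum_affine mass mean -sum_affine mulr_sumr; apply: ler_sum => j _.
by rewrite mulrA; apply: ler_wpM2r => //; exact: kantorovich_chord_le_powR.
Qed.

End PowerInequalities.

Section Matrices.
Variable R : realType.
Local Notation C := R[i].
Local Notation normc := Normc.normc.
Local Notation diagR f := (diag_mx (\row_i rC (f i))).
Implicit Types a b p : R.

Lemma conj_rC (x : R) : Num.conj (rC x) = rC x.
Proof. exact: conjc_real. Qed.

Lemma adjM m n q (A : 'M[C]_(m, n)) (B : 'M[C]_(n, q)) : adj (A *m B) = adj B *m adj A.
Proof. by rewrite /adj trmx_mul map_mxM. Qed.

Lemma adjK m n (A : 'M[C]_(m, n)) : adj (adj A) = A.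
Proof. by apply/matrixP => i j; rewrite !mxE conjCK. Qed.

Lemma adjB m n (A B : 'M[C]_(m, n)) : adj (A - B) = adj A - adj B.
Proof. by rewrite /adj linearB map_mxB. Qed.

Lemma adjZ m n (c : C) (A : 'M[C]_(m, n)) : adj (c *: A) = Num.conj c *: adj A.
Proof. by rewrite /adj linearZ map_mxZ. Qed.

Lemma adj_diagR n (f : 'I_n -> R) : adj (diagR f) = diagR f.
Proof.
rewrite /adj tr_diag_mx map_diag_mx; congr diag_mx.
by apply/rowP => i; rewrite !mxE; exact: conj_rC.
Qed.

Lemma conjc_mulE (z : C) : Num.conj z * z = (normc z ^+ 2)%:C.
Proof. by rewrite mulrC -sqr_normc -rmorphXn. Qed.

Lemma adj_mul_self n (x : 'cV[C]_n) : (adj x *m x) 0 0 = (\sum_i normc (x i 0) ^+ 2)%:C.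
Proof. by rewrite mxE rmorph_sum; apply: eq_bigr => i _; rewrite !mxE conjc_mulE. Qed.

Lemma adj_mul_self_gt0 n (x : 'cV[C]_n) : x != 0 -> 0 < (adj x *m x) 0 0.
Proof.
move=> x_neq0; have [i xi_neq0|x0] := pickP (fun i => x i 0 != 0); last first.
  suff x_eq0 : x = 0 by rewrite x_eq0 eqxx in x_neq0.
  by apply/matrixP => i j; rewrite ord1 mxE; apply/eqP/negbFE/x0.
rewrite adj_mul_self ltcR (bigD1 i) //= ltr_pwDl ?sumr_ge0 // => [|j _]; last exact: sqr_ge0.
by rewrite exprn_even_gt0 //=; apply: contra xi_neq0 => /eqP/Normc.eq0_normc ->.
Qed.

Lemma spectral_qform m n (U : 'M[C]_(n, m)) (f : 'I_m -> R) (x : 'cV[C]_n) :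
  (adj x *m (U *m diagR f *m adj U) *m x) 0 0
  = (\sum_i f i * normc ((adj U *m x) i 0) ^+ 2)%:C.
Proof.
set w := adj U *m x.
have -> : adj x *m (U *m diagR f *m adj U) *m x = adj w *m diagR f *m w.
  by rewrite /w adjM adjK !mulmxA.
clearbody w; rewrite mxE rmorph_sum; apply: eq_bigr => j _.
by rewrite mul_mx_diag !mxE rmorphM /= -conjc_mulE mulrAC [RHS]mulrC.
Qed.

Lemma unitary_adj_mul_self n (U : 'M[C]_n) (x : 'cV[C]_n) : unitary U ->
  (adj x *m x) 0 0 = (\sum_i normc ((adj U *m x) i 0) ^+ 2)%:C.
Proof.
move=> hU; rewrite -adj_mul_self adjM adjK.
by rewrite !mulmxA -[adj x *m U *m adj U]mulmxA hU mulmx1.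
Qed.

Lemma hermitian_spectral m n (U : 'M[C]_(n, m)) (f : 'I_m -> R) :
  Defs.hermitian (U *m diagR f *m adj U).
Proof. by rewrite /Defs.hermitian !adjM adjK adj_diagR mulmxA. Qed.

Lemma spectral_eigenvalue n (U : 'M[C]_n) (f : 'I_n -> R) i :
  unitary U -> eigenvalue (U *m diagR f *m adj U) (rC (f i)).
Proof.
move=> /mulmx1C hU; apply/eigenvalueP; exists (row i (adj U)).
  rewrite -row_mul !mulmxA hU mul1mx mul_diag_mx.
  by apply/rowP => j; rewrite !mxE.
apply: contra_neq (@oner_neq0 C) => rowU0.
have := congr1 (row i) hU; rewrite row_mul rowU0 mul0mx row1.
by move/rowP/(_ i); rewrite !mxE !eqxx /= => ->.
Qed.

Lemma eigenvalue_qform n (A : 'M[C]_n) l : eigenvalue A l ->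
  exists2 x : 'cV[C]_n, 0 < (adj x *m x) 0 0 & (adj x *m A *m x) 0 0 = l * (adj x *m x) 0 0.
Proof.
case/eigenvalueP => v hv v_neq0; exists (adj v).
  apply: adj_mul_self_gt0; apply: contra_neq v_neq0 => v0.
  by rewrite -[v]adjK v0 /adj trmx0 map_mx0.
by rewrite adjK hv -scalemxAl mxE.
Qed.

Lemma psd_eigenvalue_ge0 n (A : 'M[C]_n) l : psd A -> eigenvalue A l -> 0 <= l.
Proof.
move=> [_ A_ge0] /eigenvalue_qform[x x_gt0 hx].
by rewrite -(pmulr_lge0 _ x_gt0) -hx.
Qed.

Lemma psd_spec_decomp n (A : 'M[C]_n) : psd A -> exists Ud, spec_decomp A Ud.
Proof.
move=> A_psd; have A_herm : A \is hermsymmx.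
  by rewrite is_hermitianmxE expr0 scale1r; apply/eqP; rewrite -[LHS]A_psd.1.
have /orthomx_spectralP A_eq := hermitian_normalmx A_herm.
have P_unitary : spectralmx A \is unitarymx := spectral_unitarymx A.
rewrite invmx_unitary // in A_eq.
set P := spectralmx A in A_eq P_unitary; set sp := spectral_diag A in A_eq.
have sp_real : sp \is a realmx := hermitian_spectral_diag_real A_herm.
pose d : 'rV[R]_n := \row_j complex.Re (sp 0 j).
have sp_d : diag_mx sp = diagR (fun j => d 0 j).
  congr diag_mx; apply/rowP => j; rewrite !mxE.
  by apply/esym/RRe_real; exact: (mxOverP sp_real).
have W_unitary : unitary (adj P) by rewrite /unitary adjK; exact/mulmx1C/unitarymxP.
have A_spec : A = adj P *m diagR (fun j => d 0 j) *m adj (adj P) by rewrite adjK -sp_d.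
exists (adj P, d); split=> //= j.
by rewrite -lecR; apply: psd_eigenvalue_ge0 A_psd _; rewrite A_spec; exact: spectral_eigenvalue.
Qed.

Lemma mxpowR_psd n (A : 'M[C]_n) p : psd A ->
  exists2 Ud, spec_decomp A Ud &
    mxpowR A p = Ud.1 *m diagR (fun i => powR (Ud.2 0 i) p) *m adj Ud.1.
Proof.
move=> /psd_spec_decomp A_spec; rewrite /mxpowR; case: pselect => [h|//].
by exists (projT1 (cid h)); first exact: projT2 (cid h).
Qed.

Lemma posdef_psd n (A : 'M[C]_n) : posdef A -> psd A.
Proof.
move=> [A_herm A_gt0]; split=> // x.
have [->|x_neq0] := eqVneq x 0; last exact/ltW/A_gt0.
by rewrite mulmx0 mxE.
Qed.

Lemma compression_qform m n (V : 'M[C]_(n, m)) (A : 'M[C]_n) (x : 'cV[C]_m) :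
  adj x *m compression V A *m x = adj (V *m x) *m A *m (V *m x).
Proof. by rewrite /compression adjM !mulmxA. Qed.

Lemma isometry_adj_mul_self m n (V : 'M[C]_(n, m)) (x : 'cV[C]_m) :
  is_isometry V -> adj (V *m x) *m (V *m x) = adj x *m x.
Proof. by move=> hV; rewrite adjM mulmxA -[adj x *m _ *m V]mulmxA hV mulmx1. Qed.

Lemma hermitian_compression m n (V : 'M[C]_(n, m)) (A : 'M[C]_n) :
  Defs.hermitian A -> Defs.hermitian (compression V A).
Proof. by rewrite /Defs.hermitian /compression => hA; rewrite !adjM adjK hA mulmxA. Qed.

Lemma psd_compression m n (V : 'M[C]_(n, m)) (A : 'M[C]_n) :
  psd A -> psd (compression V A).
Proof.
by move=> [hA A_ge0]; split=> [|x]; [exact: hermitian_compression | rewrite compression_qform].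
Qed.

Lemma spectral_qform_between n (U : 'M[C]_n) (f : 'I_n -> R) a b (x : 'cV[C]_n) :
  unitary U -> (forall i, b <= f i <= a) ->
  rC b * (adj x *m x) 0 0 <= (adj x *m (U *m diagR f *m adj U) *m x) 0 0
    <= rC a * (adj x *m x) 0 0.
Proof.
move=> hU hf; rewrite spectral_qform (unitary_adj_mul_self _ hU).
rewrite -[rC b]/(b%:C) -[rC a]/(a%:C) -!rmorphM !lecR.
by apply: sum_weighted_between => // i; exact: sqr_ge0.
Qed.

Lemma compression_eigenvalue_between m n (V : 'M[C]_(n, m)) (A : 'M[C]_n) a b l :
  is_isometry V ->
  (forall x : 'cV[C]_n, rC b * (adj x *m x) 0 0 <= (adj x *m A *m x) 0 0
                          <= rC a * (adj x *m x) 0 0) ->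
  eigenvalue (compression V A) l -> rC b <= l <= rC a.
Proof.
move=> hV hA /eigenvalue_qform[x x_gt0].
rewrite compression_qform => hx.
by have := hA (V *m x); rewrite isometry_adj_mul_self // hx !ler_pM2r.
Qed.

Lemma loewner_ge_kantorovich n k (U : 'M[C]_n) (d : 'I_n -> R) (W : 'M[C]_k)
    (e : 'I_k -> R) (V : 'M[C]_(n, k)) a b p :
  unitary U -> unitary W -> is_isometry V -> 0 <= b <= a -> 1 <= p <= 2 ->
  (forall i, b <= d i <= a) -> (forall j, b <= e j <= a) ->
  compression V (U *m diagR d *m adj U) = W *m diagR e *m adj W ->
  loewner_ge (W *m diagR (fun j => e j `^ p) *m adj W)
    (rC (kantorovich_const a b) *: compression V (U *m diagR (fun i => d i `^ p) *m adj U)).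
Proof.
move=> hU hW hV b_between p12 hd he hM; split.
  rewrite /Defs.hermitian adjB adjZ conj_rC hermitian_spectral.
  by rewrite (hermitian_compression _ (hermitian_spectral _ _)).
move=> x; have entry (X Y : 'M[C]_1) c : (X - c *: Y) 0 0 = X 0 0 - c * Y 0 0.
  by rewrite !mxE.
rewrite mulmxBr mulmxBl -scalemxAr -scalemxAl entry compression_qform !spectral_qform.
rewrite -[rC _]/(_%:C) -rmorphM -rmorphB ler0c subr_ge0.
apply: kantorovich_powR_sum => // [i|j||]; try exact: sqr_ge0.
  apply: complexI; rewrite -(unitary_adj_mul_self _ hU) -(unitary_adj_mul_self _ hW).
  by rewrite isometry_adj_mul_self.
have := spectral_qform W e x; rewrite -hM compression_qform spectral_qform.
by move/complexI.
Qed.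

End Matrices.

Theorem proposition1p11 (R : realType) (n : nat) (Z : 'M[R[i]]_n) (a b p : R)
  (hZ : posdef Z)
  (ha : eigenvalue Z (rC a)) (hb : eigenvalue Z (rC b))
  (hab : forall l : R[i], eigenvalue Z l -> rC b <= l <= rC a)
  (hp1 : 1 <= p) (hp2 : p <= 2) :
  forall (k : nat) (V : 'M[R[i]]_(n, k)), is_isometry V ->
    loewner_ge (mxpowR (compression V Z) p)
      (rC (4 * a * b / (a + b) ^+ 2) *: compression V (mxpowR Z p)).
Proof.
move=> k V hV; have Z_psd := posdef_psd hZ.
have [[U d] [/= hU _ Z_spec] ->] := mxpowR_psd p Z_psd.
have [[W e] [/= hW _ M_spec] ->] := mxpowR_psd p (psd_compression V Z_psd).
have b_ge0 : 0 <= b by rewrite -lecR; exact: psd_eigenvalue_ge0 Z_psd hb.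
have b_le_a : b <= a by have := hab _ hb; rewrite !lecR => /andP[].
have hd i : b <= d 0 i <= a.
  by rewrite -!lecR; apply: hab; rewrite Z_spec; exact: spectral_eigenvalue.
have he j : b <= e 0 j <= a.
  rewrite -!lecR; apply: (compression_eigenvalue_between (A := Z) hV) => [x|].
    by rewrite Z_spec; exact: spectral_qform_between.
  by rewrite M_spec; exact: spectral_eigenvalue.
apply: (loewner_ge_kantorovich hU hW hV) => //; first by rewrite b_ge0 b_le_a.
  by rewrite hp1 hp2.
by rewrite -Z_spec.
Qed.
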